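(* Let $\mathfrak{C}$ be a category and $\mathbb{K}$ a field. There is a one-to-one correspondence $\epsilon \leftrightarrow \mathfrak{I}_{\epsilon}$ between the idempotents $\epsilon$ of $m(\mathfrak{C})$ and the ideals $\mathfrak{I}_\epsilon$ of $\mathfrak{C}$ (including the empty ideal), given by $$\epsilon(x,y) = \begin{cases} 1, & \text{if } \exists xy \text{ and } xy \notin \mathfrak{I}_\epsilon, \\ 0, & \text{if } xy \text{ is not defined, or } \exists xy \text{ and } xy \in \mathfrak{I}_\epsilon, \end{cases}$$ and it satisfies $\mathfrak{I}_{\epsilon_1\epsilon_2} = \mathfrak{I}_{\epsilon_1} \cup \mathfrak{I}_{\epsilon_2}$ for idempotents $\epsilon_1,\epsilon_2$.
   Context: A semigroupoid is a set with a partially defined associative operation ($\exists xy$ means $xy$ is defined). A category is a semigroupoid where each $x$ has unique identities $r(x),d(x)$ with $r(x)x=x=xd(x)$, and $\exists xy$ iff $d(x)=r(y)$. A subset $\mathfrak{I}\subseteq\mathfrak{C}$ is an ideal if whenever $y\in\mathfrak{I}$ and $\exists xy$ (resp. $\exists yx$) then $xy\in\mathfrak{I}$ (resp. $yx\in\mathfrak{I}$). A $\mathbb{K}$-semigroup is a semigroup $S$ with zero and a scalar action $\mathbb{K}\times S\to S$ with $\alpha(\beta x)=(\alpha\beta)x$, $1x=x$, $\alpha(xy)=(\alpha x)y=x(\alpha y)$, $0_{\mathbb{K}}x=0$; $\mathbb{K}$-cancellative if $\alpha x=\beta x$, $x\neq0$ imply $\alpha=\beta$. A projective representation of $\mathfrak{C}$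 on a $\mathbb{K}$-cancellative semigroup $S$ is $\Gamma:\mathfrak{C}\to S$ with: if $\exists xy$ then $\Gamma(xy)=0\iff\Gamma(x)\Gamma(y)=0$; if $xy$ undefined then $\Gamma(x)\Gamma(y)=0$; and $\Gamma(x)\Gamma(y)=\Gamma(xy)\rho(x,y)$ with $\rho(x,y)\in\mathbb{K}^*$ whenever $\exists xy$, $\Gamma(xy)\ne0$. Its factor set is $\rho:\mathfrak{C}\times\mathfrak{C}\to\mathbb{K}$, extended by $0$ when $xy$ is undefined or $\Gamma(xy)=0$. $m(\mathfrak{C})$ is the set of all factor sets of projective representations of $\mathfrak{C}$, a commutative semigroup under pointwise multiplication. *)

From mathcomp Require Import all_boot all_algebra.
Set Implicit Arguments. Unset Strict Implicit. Unset Printing Implicit Defensive.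
Import GRing.Theory.
Local Open Scope ring_scope.

(* A category in the sense of the paper: a set with a partially defined
   associative product (mul x y = Some xy means "exists xy"), in which every x
   has unique identities r x, d x with r(x)x = x = x d(x), and xy is defined
   iff d x = r y. *)
Record category := Category {
  cat_car :> Type;
  cat_mul : cat_car -> cat_car -> option cat_car;
  cat_r : cat_car -> cat_car;
  cat_d : cat_car -> cat_car;
  cat_assoc : forall x y z xy yz, cat_mul x y = Some xy -> cat_mul y z = Some yz ->
     cat_mul xy z = cat_mul x yz;
  cat_def : forall x y, cat_mul x y <> None <-> cat_d x = cat_r y;
  cat_rx : forall x, cat_mul (cat_r x) x = Some x;
  cat_xd : forall x, cat_mul x (cat_d x) = Some x;
  cat_r_id : forall x z w, cat_mul (cat_r x) z = Some w -> w = z;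
  cat_r_id' : forall x z w, cat_mul z (cat_r x) = Some w -> w = z;
  cat_d_id : forall x z w, cat_mul (cat_d x) z = Some w -> w = z;
  cat_d_id' : forall x z w, cat_mul z (cat_d x) = Some w -> w = z;
  cat_r_uniq : forall x e,
     (forall z w, cat_mul e z = Some w -> w = z) ->
     (forall z w, cat_mul z e = Some w -> w = z) ->
     cat_mul e x = Some x -> e = cat_r x;
  cat_d_uniq : forall x e,
     (forall z w, cat_mul e z = Some w -> w = z) ->
     (forall z w, cat_mul z e = Some w -> w = z) ->
     cat_mul x e = Some x -> e = cat_d x
}.

Definition is_ideal (C : category) (I : C -> Prop) : Prop :=
  forall x y xy, cat_mul x y = Some xy -> (I y -> I xy) /\ (I x -> I xy).

Record ksemigroup (K : fieldType) := KSemigroup {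
  ks_car :> Type;
  ks_mul : ks_car -> ks_car -> ks_car;
  ks_zero : ks_car;
  ks_scale : K -> ks_car -> ks_car;
  ks_mulA : forall x y z, ks_mul x (ks_mul y z) = ks_mul (ks_mul x y) z;
  ks_mul0l : forall x, ks_mul ks_zero x = ks_zero;
  ks_mul0r : forall x, ks_mul x ks_zero = ks_zero;
  ks_scaleA : forall a b x, ks_scale a (ks_scale b x) = ks_scale (a * b) x;
  ks_scale1 : forall x, ks_scale 1 x = x;
  ks_scale_mull : forall a x y, ks_scale a (ks_mul x y) = ks_mul (ks_scale a x) y;
  ks_scale_mulr : forall a x y, ks_scale a (ks_mul x y) = ks_mul x (ks_scale a y);
  ks_scale0 : forall x, ks_scale 0 x = ks_zero
}.

Definition kcancellative (K : fieldType) (S : ksemigroup K) : Prop :=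
  forall (a b : K) (x : S), ks_scale a x = ks_scale b x -> x <> ks_zero S -> a = b.

Definition proj_rep (K : fieldType) (C : category) (S : ksemigroup K)
    (G : C -> S) : Prop :=
  forall x y,
    match cat_mul x y with
    | Some xy =>
        (G xy = ks_zero S <-> ks_mul (G x) (G y) = ks_zero S) /\
        (G xy <> ks_zero S ->
           exists a : K, a != 0 /\ ks_mul (G x) (G y) = ks_scale a (G xy))
    | None => ks_mul (G x) (G y) = ks_zero S
    end.

Definition is_factor_set (K : fieldType) (C : category) (S : ksemigroup K)
    (G : C -> S) (rho : C -> C -> K) : Prop :=
  forall x y,
    match cat_mul x y with
    | Some xy =>
        (G xy <> ks_zero S -> ks_mul (G x) (G y) = ks_scale (rho x y) (G xy)) /\
        (G xy = ks_zero S -> rho x y = 0)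
    | None => rho x y = 0
    end.

Definition in_mC (K : fieldType) (C : category) (rho : C -> C -> K) : Prop :=
  exists (S : ksemigroup K) (G : C -> S),
    kcancellative S /\ proj_rep G /\ is_factor_set G rho.

(* Idempotents of the commutative semigroup m(C) (pointwise product). *)
Definition idem_mC (K : fieldType) (C : category) (e : C -> C -> K) : Prop :=
  in_mC e /\ forall x y, e x y * e x y = e x y.

Definition eps_ideal (K : fieldType) (C : category) (e : C -> C -> K)
    (I : C -> Prop) : Prop :=
  forall x y,
    match cat_mul x y with
    | Some xy => (~ I xy -> e x y = 1) /\ (I xy -> e x y = 0)
    | None => e x y = 0
    end.

(* An idempotent factor set e takes only the values 0 and 1.  If G is a
   projective representation affording e, its kernel {z | G z = 0} is an ideal,
   and e(x, y) = 1 exactly when xy is defined and lies outside it; since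
   r(z) z = z, the single value e(r z, z) tells whether z is in the ideal, so the
   ideal is unique.  Conversely, an ideal I is realised by the contracted
   semigroup K^* x (C \ I) with a zero, where products falling into I are sent
   to zero: z |-> (1, z) is multiplicative and its factor set is the 0/1
   function of I.  That function is determined pointwise by I, and the product
   of two of them is the function of the union of the ideals. *)

From mathcomp Require Import all_boot all_algebra boolp.
Set Implicit Arguments. Unset Strict Implicit. Unset Printing Implicit Defensive.
Import GRing.Theory.
Local Open Scope ring_scope.

Section CategoryProduct.
Variable C : category.
Implicit Types x y z w : C.

Lemma cat_d_mul x y w : cat_mul x y = Some w -> cat_d w = cat_d y.
Proof.
move=> xy_w; have := cat_assoc xy_w (cat_xd y); rewrite xy_w => w_dy.
by apply/esym/cat_d_uniq; [exact: cat_d_id | exact: cat_d_id' | ].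
Qed.

Lemma cat_r_mul x y w : cat_mul x y = Some w -> cat_r w = cat_r x.
Proof.
move=> xy_w; have := cat_assoc (cat_rx x) xy_w; rewrite xy_w => rx_w.
by apply/esym/cat_r_uniq; [exact: cat_r_id | exact: cat_r_id' | rewrite -rx_w].
Qed.

Lemma cat_mulA x y z :
  obind (fun w => cat_mul w z) (cat_mul x y) = obind (cat_mul x) (cat_mul y z).
Proof.
case xy_w: (cat_mul x y) => [w|]; case yz_u: (cat_mul y z) => [u|] //=.
- exact: cat_assoc xy_w yz_u.
- case wz: (cat_mul w z) => [v|] //.
  have /cat_def : cat_mul w z <> None by rewrite wz.
  by rewrite (cat_d_mul xy_w) => /cat_def; rewrite yz_u.
- case xu: (cat_mul x u) => [v|] //.
  have /cat_def : cat_mul x u <> None by rewrite xu.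
  by rewrite (cat_r_mul yz_u) => /cat_def; rewrite xy_w.
Qed.

End CategoryProduct.

Section ReesQuotient.
Variables (C : category) (I : C -> Prop).
Hypothesis idealI : is_ideal I.
Implicit Types x y z : C.

Definition rees_prune (o : option C) : option C :=
  obind (fun w => if `[< I w >] then None else Some w) o.

Definition rees_mul x y : option C := rees_prune (cat_mul x y).

Lemma rees_mul_obindl x y z :
  obind (fun w => rees_mul w z) (rees_mul x y)
  = rees_prune (obind (fun w => cat_mul w z) (cat_mul x y)).
Proof.
rewrite /rees_mul; case xy_w: (cat_mul x y) => [w|] //=.
case: asboolP => [Iw|_] //=; case wz_v: (cat_mul w z) => [v|] //=.
by rewrite asboolT //; exact: (idealI wz_v).2.
Qed.

Lemma rees_mul_obindr x y z :
  obind (rees_mul x) (rees_mul y z)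
  = rees_prune (obind (cat_mul x) (cat_mul y z)).
Proof.
rewrite /rees_mul; case yz_u: (cat_mul y z) => [u|] //=.
case: asboolP => [Iu|_] //=; case xu_v: (cat_mul x u) => [v|] //=.
by rewrite asboolT //; exact: (idealI xu_v).1.
Qed.

Lemma rees_mulA x y z :
  obind (fun w => rees_mul w z) (rees_mul x y) = obind (rees_mul x) (rees_mul y z).
Proof. by rewrite rees_mul_obindl rees_mul_obindr cat_mulA. Qed.

End ReesQuotient.

Section ReesKSemigroup.
Variables (K : fieldType) (C : category) (I : C -> Prop).
Hypothesis idealI : is_ideal I.

Definition Kstar := {a : K | a != 0}.

Definition Kstar1 : Kstar := exist _ 1 (oner_neq0 K).

(* The contracted semigroup K^* x (C minus I) with a zero: [None] is the zero,
   and [rees_mk] sends coefficient 0 to it. *)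
Definition rees_elt := option (Kstar * C).

Definition rees_mk (a : K) (x : C) : rees_elt := omap (fun b => (b, x)) (insub a).

Definition rees_smul (p q : rees_elt) : rees_elt :=
  match p, q with
  | Some (a, x), Some (b, y) => obind (rees_mk (val a * val b)) (rees_mul I x y)
  | _, _ => None
  end.

Definition rees_scale (c : K) (p : rees_elt) : rees_elt :=
  if p is Some (a, x) then rees_mk (c * val a) x else None.

Lemma rees_mk_val (a : Kstar) x : rees_mk (val a) x = Some (a, x).
Proof. by rewrite /rees_mk valK. Qed.

Lemma rees_mk0 x : rees_mk 0 x = None.
Proof. by rewrite /rees_mk insubF ?eqxx. Qed.

Lemma rees_mk_inj x : injective (rees_mk^~ x).
Proof.
move=> a b; rewrite /rees_mk.
case: insubP => [u _ <-|/negbNE/eqP ->]; case: insubP => [v _ <-|/negbNE/eqP ->] //=.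
by case=> ->.
Qed.

Lemma rees_scale_mk c a x : rees_scale c (rees_mk a x) = rees_mk (c * a) x.
Proof.
by rewrite {1}/rees_mk; case: insubP => [u _ <-|/negbNE/eqP ->] //=; rewrite mulr0 rees_mk0.
Qed.

Lemma rees_scale_obind c k o :
  rees_scale c (obind (rees_mk k) o) = obind (rees_mk (c * k)) o.
Proof. by case: o => //= x; rewrite rees_scale_mk. Qed.

Lemma rees_smul_some a x b y :
  rees_smul (Some (a, x)) (Some (b, y)) = obind (rees_mk (val a * val b)) (rees_mul I x y).
Proof. by []. Qed.

Lemma rees_smul0r p : rees_smul p None = None.
Proof. by case: p => [[]|]. Qed.

Lemma rees_smul_obindr a x k o :
  rees_smul (Some (a, x)) (obind (rees_mk k) o)
  = obind (rees_mk (val a * k)) (obind (rees_mul I x) o).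
Proof.
case: o => [u|] //=; rewrite {1}/rees_mk.
case: insubP => [b _ <-|/negbNE/eqP ->] //=.
by case: (rees_mul I x u) => //= v; rewrite mulr0 rees_mk0.
Qed.

Lemma rees_smul_obindl k o b y :
  rees_smul (obind (rees_mk k) o) (Some (b, y))
  = obind (rees_mk (k * val b)) (obind (fun w => rees_mul I w y) o).
Proof.
case: o => [u|] //=; rewrite {1}/rees_mk.
case: insubP => [a _ <-|/negbNE/eqP ->] //=.
by case: (rees_mul I u y) => //= v; rewrite mul0r rees_mk0.
Qed.

Lemma rees_smulA p q r : rees_smul p (rees_smul q r) = rees_smul (rees_smul p q) r.
Proof.
case: p q r => [[a x]|] [[b y]|] [[c z]|] //; rewrite ?rees_smul0r //.
by rewrite !rees_smul_some rees_smul_obindr rees_smul_obindl (rees_mulA idealI) mulrA.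
Qed.

Lemma rees_scaleA a b p : rees_scale a (rees_scale b p) = rees_scale (a * b) p.
Proof. by case: p => [[u x]|] //=; rewrite rees_scale_mk mulrA. Qed.

Lemma rees_scale1 p : rees_scale 1 p = p.
Proof. by case: p => [[u x]|] //=; rewrite mul1r rees_mk_val. Qed.

Lemma rees_scale0 p : rees_scale 0 p = None.
Proof. by case: p => [[u x]|] //=; rewrite mul0r rees_mk0. Qed.

Lemma rees_scale_smull c p q : rees_scale c (rees_smul p q) = rees_smul (rees_scale c p) q.
Proof.
case: p q => [[a x]|] [[b y]|] //; rewrite ?rees_smul0r //.
rewrite -[rees_scale c (Some _)]/(obind (rees_mk (c * val a)) (Some x)).
by rewrite rees_smul_some rees_smul_obindl rees_scale_obind mulrA.
Qed.

Lemma rees_scale_smulr c p q : rees_scale c (rees_smul p q) = rees_smul p (rees_scale c q).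
Proof.
case: p q => [[a x]|] [[b y]|] //; rewrite ?rees_smul0r //.
rewrite -[rees_scale c (Some _)]/(obind (rees_mk (c * val b)) (Some y)).
by rewrite rees_smul_some rees_smul_obindr rees_scale_obind mulrCA.
Qed.

Definition rees_ksemigroup : ksemigroup K :=
  @KSemigroup K rees_elt rees_smul None rees_scale rees_smulA (fun _ => erefl)
    rees_smul0r rees_scaleA rees_scale1 rees_scale_smull rees_scale_smulr rees_scale0.

Lemma rees_kcancellative : kcancellative rees_ksemigroup.
Proof.
by move=> a b [[u x]|] //= /rees_mk_inj /(mulIf (valP u)).
Qed.

Definition rees_rep (z : C) : rees_ksemigroup :=
  if `[< I z >] then None else Some (Kstar1, z).

Lemma rees_rep_eq0 z : rees_rep z = None <-> I z.
Proof. by rewrite /rees_rep; case: asboolP. Qed.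

Lemma rees_rep_mul x y :
  rees_smul (rees_rep x) (rees_rep y)
  = if cat_mul x y is Some w then rees_rep w else None.
Proof.
rewrite /rees_rep; case xy_w: (cat_mul x y) => [w|]; last first.
  by do 2 case: asboolP => _ //=; rewrite /rees_mul xy_w.
case: (asboolP (I x)) => [Ix|_].
  by rewrite (@asboolT (I w)) //; exact: (idealI xy_w).2.
case: (asboolP (I y)) => [Iy|_].
  by rewrite (@asboolT (I w)) ?rees_smul0r //; exact: (idealI xy_w).1.
rewrite rees_smul_some /rees_mul /rees_prune xy_w /=.
by case: asboolP => //= _; rewrite mulr1 -(rees_mk_val Kstar1).
Qed.

End ReesKSemigroup.

Section IdealIdempotent.
Variables (K : fieldType) (C : category).
Implicit Types (I J : C -> Prop) (e : C -> C -> K).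

Definition eps_of_ideal I (x y : C) : K :=
  if cat_mul x y is Some w then (if `[< I w >] then 0 else 1) else 0.

Lemma eps_of_idealP I : eps_ideal (eps_of_ideal I) I.
Proof.
move=> x y; rewrite /eps_of_ideal; case: (cat_mul x y) => [w|] //.
by split; case: asboolP.
Qed.

Lemma eps_idealE e I : eps_ideal e I -> forall x y, e x y = eps_of_ideal I x y.
Proof.
move=> eI x y; have := eI x y; rewrite /eps_of_ideal.
by case: (cat_mul x y) => [w|] // [eI_out eI_in]; case: asboolP.
Qed.

Lemma eps_of_ideal_idem I x y : eps_of_ideal I x y * eps_of_ideal I x y = eps_of_ideal I x y.
Proof.
rewrite /eps_of_ideal; case: (cat_mul x y) => [w|]; last exact: mulr0.
by case: asboolP; rewrite ?mulr0 ?mulr1.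
Qed.

Lemma eps_ideal_mem e I z : eps_ideal e I -> I z <-> e (cat_r z) z = 0.
Proof.
move=> eI; have := eI (cat_r z) z; rewrite cat_rx => -[eI_out eI_in].
split=> [/eI_in // | e0].
by apply: contrapT => /eI_out; rewrite e0 => /eqP; rewrite eq_sym oner_eq0.
Qed.

Lemma is_ideal_or I J : is_ideal I -> is_ideal J -> is_ideal (fun z => I z \/ J z).
Proof.
move=> idealI idealJ x y xy xy_w; have [Iy Ix] := idealI _ _ _ xy_w.
have [Jy Jx] := idealJ _ _ _ xy_w.
by split=> -[?|?]; [left; exact: Iy | right; exact: Jy | left; exact: Ix | right; exact: Jx].
Qed.

Lemma eps_ideal_mul e1 e2 I1 I2 : eps_ideal e1 I1 -> eps_ideal e2 I2 ->
  eps_ideal (fun x y => e1 x y * e2 x y) (fun z => I1 z \/ I2 z).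
Proof.
move=> eI1 eI2 x y; have := eI1 x y; have := eI2 x y.
case: (cat_mul x y) => [w|]; last by move=> -> ->; rewrite mulr0.
move=> [e2_out e2_in] [e1_out e1_in]; split.
  by move=> out; rewrite e1_out ?e2_out ?mulr1 // => ?; apply: out; [right | left].
by case=> [/e1_in -> | /e2_in ->]; rewrite ?mul0r ?mulr0.
Qed.

End IdealIdempotent.

Section Representations.
Variables (K : fieldType) (C : category) (S : ksemigroup K) (G : C -> S).

Lemma proj_rep_kernel_ideal : proj_rep G -> is_ideal (fun z => G z = ks_zero S).
Proof.
move=> repG x y w xy_w; have := repG x y; rewrite xy_w => -[kerG _].
by split=> G0; apply/kerG; rewrite G0 (ks_mul0r, ks_mul0l).
Qed.

(* A nonzero idempotent of K is 1, and rho(x, y) = 0 would force G(xy) = 0. *)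
Lemma idem_factor_set_eps_ideal rho :
  proj_rep G -> is_factor_set G rho -> (forall x y, rho x y * rho x y = rho x y) ->
  eps_ideal rho (fun z => G z = ks_zero S).
Proof.
move=> repG rhoG rho_idem x y; have := repG x y; have := rhoG x y.
case: (cat_mul x y) => [w|] // [rho_out rho_in] [kerG _]; split=> // Gw.
have rho_neq0 : rho x y != 0.
  by apply/eqP => rho0; apply/Gw/kerG; rewrite rho_out // rho0 ks_scale0.
by apply: (mulfI rho_neq0); rewrite rho_idem mulr1.
Qed.

Hypothesis G_mul : forall x y,
  ks_mul (G x) (G y) = if cat_mul x y is Some w then G w else ks_zero S.

Lemma mul_rep_proj_rep : proj_rep G.
Proof.
move=> x y; rewrite G_mul; case: (cat_mul x y) => [w|] //.
by split=> // _; exists 1; rewrite oner_neq0 ks_scale1.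
Qed.

Lemma mul_rep_factor_set I : (forall z, G z = ks_zero S <-> I z) ->
  is_factor_set G (eps_of_ideal K I).
Proof.
move=> kerG x y; rewrite /eps_of_ideal G_mul; case: (cat_mul x y) => [w|] //.
case: asboolP => [Iw | Iw]; split=> //.
- by case; apply/kerG.
- by rewrite ks_scale1.
- by move/kerG.
Qed.

End Representations.

Lemma in_mC_eps_of_ideal (K : fieldType) (C : category) (I : C -> Prop) :
  is_ideal I -> in_mC (eps_of_ideal K I).
Proof.
move=> idealI; exists (rees_ksemigroup K idealI), (rees_rep K idealI).
split; first exact: rees_kcancellative.
split; first exact/mul_rep_proj_rep/rees_rep_mul.
exact/mul_rep_factor_set/rees_rep_eq0/rees_rep_mul.
Qed.

Lemma eps_ideal_idem_mC (K : fieldType) (C : category) (e : C -> C -> K) (I : C -> Prop) :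
  is_ideal I -> eps_ideal e I -> idem_mC e.
Proof.
move=> idealI eI; have -> : e = eps_of_ideal K I.
  by apply/funext => x; apply/funext => y; exact: eps_idealE.
by split; [exact: in_mC_eps_of_ideal | exact: eps_of_ideal_idem].
Qed.

Theorem mainTheorem6 (C : category) (K : fieldType) :
  (* every idempotent determines a unique ideal *)
  (forall e : C -> C -> K, idem_mC e ->
     exists I : C -> Prop, is_ideal I /\ eps_ideal e I /\
       forall J : C -> Prop, is_ideal J -> eps_ideal e J -> forall z, J z <-> I z) /\
  (* every ideal determines a unique idempotent *)
  (forall I : C -> Prop, is_ideal I ->
     exists e : C -> C -> K, idem_mC e /\ eps_ideal e I /\
       forall f : C -> C -> K, idem_mC f -> eps_ideal f I -> forall x y, f x y = e x y) /\
  (* I_{e1 e2} = I_{e1} \cup I_{e2} *)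
  (forall (e1 e2 : C -> C -> K) (I1 I2 : C -> Prop),
     idem_mC e1 -> idem_mC e2 -> is_ideal I1 -> is_ideal I2 ->
     eps_ideal e1 I1 -> eps_ideal e2 I2 ->
     idem_mC (fun x y => e1 x y * e2 x y) /\
     eps_ideal (fun x y => e1 x y * e2 x y) (fun z => I1 z \/ I2 z)).
Proof.
split; [|split].
- move=> e [[S [G [_ [repG rhoG]]]] e_idem].
  have eKer := idem_factor_set_eps_ideal repG rhoG e_idem.
  exists (fun z => G z = ks_zero S); split; first exact: proj_rep_kernel_ideal.
  split=> // J _ eJ z.
  exact: iff_trans (eps_ideal_mem z eJ) (iff_sym (eps_ideal_mem z eKer)).
- move=> I idealI; exists (eps_of_ideal K I).
  have eI := eps_of_idealP K I.
  split; first exact: eps_ideal_idem_mC idealI eI.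
  by split=> // f _ fI; exact: eps_idealE.
- move=> e1 e2 I1 I2 _ _ idealI1 idealI2 eI1 eI2.
  have eI12 := eps_ideal_mul eI1 eI2.
  by split=> //; exact: eps_ideal_idem_mC (is_ideal_or idealI1 idealI2) eI12.
Qed.
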